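(* Let $n\geq 1$ and let $R_\bullet$, $\Omega(R_\bullet)$, $N_*$, $D_*$, $\omega_q$, $\alpha_q$, $\beta_q$, $(\omega_q)_i$, $(\omega_q)_{i,j}$ be as in the context. Then for every $q\geq 0$: if $n$ is odd, $\omega_q$ is a cycle in $N_q\Omega(R_\bullet)$ (i.e. $\omega_q\in N_q\Omega(R_\bullet)$ and $d_0\omega_q=0$); if $n$ is even, $\alpha_q$ and $\beta_q$ are cycles in $N_q\Omega(R_\bullet)$. Furthermore, for any $n$, the elements $(\omega_{q+1})_r$, $(\omega_{q+1})_{j,k}$ and $y_r(\omega_{q+1})_{j,k}$ lie in $D_{q+1}\Omega(R_\bullet)$ for all $1\leq j<k\leq q+1$ and $1\leq r\leq q+1$.
   Context: All algebras are over $\mathbb{F}_2$ and (graded) commutative. Fix integers $n\geq 1$ and $|x|\geq 1$. Let $R_\bullet$ be the simplicial graded $\mathbb{F}_2$-algebra with $R_q=\mathbb{F}_2[x,y_1,\dots,y_q]$ ($q\geq 0$), $|y_i|=(n+1)|x|$, whose face maps $d_i:R_q\to R_{q-1}$ and degeneracy maps $s_i:R_q\to R_{q+1}$ ($0\le i\le q$) are the algebra maps given by $s_i(x)=x$, $d_i(x)=x$, $s_i(y_j)=y_j$ if $i\geq j$ and $s_i(y_j)=y_{j+1}$ if $i<j$; and $d_i(y_j)=x^{n+1}$ if $i=0,j=1$; $d_i(y_j)=y_{j-1}$ if $i<j$, $j>1$; $d_i(y_j)=y_j$ if $i\geq j$, $j<q$; $d_q(y_q)=0$. For a graded commutative $\mathbb{F}_2$-algebra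 $A$, the de Rham complex $\Omega(A)$ is the free $A$-algebra on generators ${\bf d}a$ ($a\in A$), $|{\bf d}a|=|a|-1$, modulo ${\bf d}(a+b)={\bf d}a+{\bf d}b$, ${\bf d}(ab)=({\bf d}a)b+a{\bf d}b$, $({\bf d}a)^2=0$; it is functorial, so $\Omega(R_\bullet)$ is a simplicial algebra. For a simplicial $\mathbb{F}_2$-vector space $V$, $N_q(V)=\bigcap_{1\le i\le q}\ker(d_i)$ is the normalized complex with differential $d_0$, and $D_q(V)\subseteq V_q$ is the subspace spanned by degenerate elements (images of the $s_i$). In $\Omega(R_q)$ put $\omega_q={\bf d}y_1\cdots{\bf d}y_q$ for $q>0$, $\omega_0=1$; $(\omega_q)_i$ is $\omega_q$ with the factor ${\bf d}y_i$ omitted and $(\omega_q)_{i,j}$ ($i<j$) is $\omega_q$ with ${\bf d}y_i,{\bf d}y_j$ omitted; $\alpha_q={\bf d}x\,\omega_q$ and $\beta_q=x\omega_q+{\bf d}x\sum_{i=1}^q y_i(\omega_q)_i$ for $q>0$, $\alpha_0={\bf d}x$, $\beta_0=x$. *)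

From HB Require Import structures.
From mathcomp Require Import all_boot all_order all_algebra.
From mathcomp Require Import mpoly.

Unset Printing Implicit Defensive.
Import GRing.Theory.
Local Open Scope ring_scope.

(* Concrete model of Omega(R_q), R_q = F_2[x, y_1, ..., y_q].          *)
(* For a polynomial algebra, Omega(R_q) is the commutative algebra     *)
(* generated over R_q by dx, dy_1, ..., dy_q subject to (dz)^2 = 0.    *)
(* We model it by W q := F_2[x,y_1..y_q,dx,dy_1..dy_q] (mpolys in      *)
(* 2(q+1) variables) modulo the ideal generated by the squares of the  *)
(* d-variables.  Variable layout: lshift v (v : 'I_(q+1)) is the       *)
(* polynomial variable (v = 0 : x, v = j : y_j), and rshift v is its   *)
(* differential d(var v).                                              *)

Definition W (q : nat) := {mpoly 'F_2[q.+1 + q.+1]}.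

Definition pvar (q : nat) (v : 'I_q.+1) : W q := 'X_(lshift q.+1 v).
Definition dvar (q : nat) (v : 'I_q.+1) : W q := 'X_(rshift q.+1 v).

(* x, y_j, dx, dy_j in Omega(R_q) (j meant in 1..q) *)
Definition X (q : nat) : W q := pvar q ord0.
Definition Y (q j : nat) : W q := pvar q (inord j).
Definition dX (q : nat) : W q := dvar q ord0.
Definition dY (q j : nat) : W q := dvar q (inord j).

(* The de Rham differential d : R_q -> Omega(R_q) (on elements of R_q,
   i.e. polynomials in the first q+1 variables). *)
Definition dR (q : nat) (p : W q) : W q :=
  \sum_(v < q.+1) (p^`M(lshift q.+1 v)) * dvar q v.

(* Equality in Omega(R_q): difference lies in the ideal generated by the
   squares (dz)^2 of the d-variables. *)
Definition in_sq_ideal (q : nat) (p : W q) : Prop :=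
  exists g : 'I_q.+1 -> W q, p = \sum_(v < q.+1) g v * dvar q v ^+ 2.

Definition omeq (q : nat) (p p' : W q) : Prop := in_sq_ideal q (p - p').

(* face d_i : R_{q+1} -> R_q (0 <= i <= q+1), on the generator number v
   of R_{q+1} (v = 0 : x, v = j : y_j, 1 <= j <= q+1). *)
Definition faceR_gen (n q i : nat) (v : 'I_q.+2) : W q :=
  let j := nat_of_ord v in
  if j == 0%N then X q
  else if (i < j)%N then
         (if j == 1%N then X q ^+ n.+1 else Y q j.-1)
       else (if (j < q.+1)%N then Y q j else 0).

Definition degR_gen (q i : nat) (v : 'I_q.+1) : W q.+1 :=
  let j := nat_of_ord v in
  if j == 0%N then X q.+1
  else if (i >= j)%N then Y q.+1 j else Y q.+1 j.+1.

(* Functoriality of Omega: an algebra map f : R -> R' induces the algebra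
   map Omega(R) -> Omega(R') with z |-> f z and dz |-> d(f z). *)
Definition Omega_map (q q' : nat) (f : 'I_q.+1 -> W q') (p : W q) : W q' :=
  p \mPo [tuple match split v with
                | inl a => f a
                | inr a => dR q' (f a)
                end | v < q.+1 + q.+1].

Definition face (n q i : nat) (p : W q.+1) : W q :=
  Omega_map q.+1 q (faceR_gen n q i) p.

Definition degen (q i : nat) (p : W q) : W q.+1 :=
  Omega_map q q.+1 (degR_gen q i) p.

(* w is a cycle of the normalized complex N_* Omega(R_bullet):
   w in N_q (d_i w = 0 for 1 <= i <= q) and d_0 w = 0.
   For q = 0, N_0 = Omega(R_0) and the differential N_0 -> 0 is zero. *)
Definition is_cycle (n q : nat) : W q -> Prop :=
  match q return W q -> Prop with
  | 0 => fun _ => True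
  | q'.+1 => fun w =>
      (forall i, (1 <= i <= q'.+1)%N -> omeq q' (face n q' i w) 0)
      /\ omeq q' (face n q' 0 w) 0
  end.

(* w lies in D_{q+1} Omega(R_bullet), the span of the degenerate elements,
   i.e. the sum of the images of s_0, ..., s_q. *)
Definition inD (q : nat) (w : W q.+1) : Prop :=
  exists u : 'I_q.+1 -> W q,
    omeq q.+1 w (\sum_(i < q.+1) degen q i (u i)).

Definition omega (q : nat) : W q := \prod_(1 <= j < q.+1) dY q j.
Definition omega_i (q i : nat) : W q :=
  \prod_(1 <= j < q.+1 | j != i) dY q j.
Definition omega_ij (q i k : nat) : W q :=
  \prod_(1 <= j < q.+1 | (j != i) && (j != k)) dY q j.
Definition alpha (q : nat) : W q := dX q * omega q.
Definition beta (q : nat) : W q :=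
  X q * omega q + dX q * \sum_(1 <= i < q.+1) Y q i * omega_i q i.

From HB Require Import structures.
From mathcomp Require Import all_boot all_order all_algebra.
From mathcomp Require Import mpoly.
From mathcomp Require Import zify ring.
Local Open Scope ring_scope.
Import GRing.Theory.

(* For 0 < i < q the
   face d_i sends both y_i and y_(i+1) to y_i, so it maps dy_i dy_(i+1) to
   (dy_i)^2 = 0; the last face kills dy_q because d_q y_q = 0; and d_0 sends
   dy_1 to (n+1) x^n dx, which vanishes for odd n and, for even n, is killed by
   the extra factor dx of alpha_q.  In d_i beta_q the two summands indexed by
   i and i+1 become equal and cancel in characteristic 2; in d_0 beta_q the two
   terms x^(n+1) dx dy_1 ... dy_(q-1) cancel likewise, and the other summands
   contain dx twice.  Finally s_i maps dy_j
   to dy_(bump (i+1) j), skipping exactly the index i+1, so s_i omega_q and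
   s_i (omega_q)_k are the forms omitting i+1, resp. i+1 and bump (i+1) k. *)

Section SeqProducts.
Variable R : comRingType.
Implicit Types (r : seq nat) (F : nat -> R).

Lemma prod_seq_eq0 r a (P : pred nat) F :
  a \in r -> P a -> F a = 0 -> \prod_(j <- r | P j) F j = 0.
Proof. by move=> ar Pa Fa0; rewrite (big_rem a) //= Pa Fa0 mul0r. Qed.

Lemma prod_seq_neq_swap r a b F : uniq r -> a \in r -> b \in r -> F a = F b ->
  \prod_(j <- r | j != a) F j = \prod_(j <- r | j != b) F j.
Proof.
move=> ur ar br Fab; have [-> //|neq_ab] := eqVneq a b.
rewrite (big_rem b) 1?eq_sym //= [RHS](big_rem a) //= neq_ab Fab.
congr (_ * _); rewrite !rem_filter // !big_filter_cond; apply: eq_bigl => j /=.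
by rewrite andbC.
Qed.

End SeqProducts.

Lemma big_nat_bump (R : Type) (idx : R) (op : Monoid.law idx) a b h
    (P : pred nat) (F : nat -> R) : (a <= h <= b)%N ->
  \big[op/idx]_(a <= j < b | P j) F (bump h j)
  = \big[op/idx]_(a <= j < b.+1 | (j != h) && P (unbump h j)) F j.
Proof.
case/andP=> le_ah le_hb.
rewrite (big_cat_nat le_ah le_hb) [RHS](big_cat_nat le_ah (leqW le_hb)).
rewrite [\big[op/idx]_(h <= j < b.+1 | _) _]big_ltn_cond ?ltnS // eqxx big_add1 /=.
congr (op _ _); rewrite big_nat_cond [RHS]big_nat_cond.
  apply: eq_big => [j|j /andP[/andP[_ lt_jh] _]]; last by rewrite /bump leqNgt lt_jh.
  case/boolP: (a <= j < h)%N => //= /andP[_ lt_jh].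
  by rewrite (ltn_eqF lt_jh) /unbump ltnNge (ltnW lt_jh) subn0.
apply: eq_big => [j|j /andP[/andP[le_hj _] _]]; last by rewrite /bump le_hj.
case/boolP: (h <= j < b)%N => //= /andP[le_hj _].
by rewrite (gtn_eqF (le_hj : (h < j.+1)%N)) /unbump ltnS le_hj subn1.
Qed.

Section SquareIdeal.
Variable q : nat.
Implicit Types p r : W q.

Lemma sq_ideal0 : in_sq_ideal q 0.
Proof. by exists (fun=> 0); rewrite big1 // => v _; rewrite mul0r. Qed.

Lemma sq_idealD p1 p2 :
  in_sq_ideal q p1 -> in_sq_ideal q p2 -> in_sq_ideal q (p1 + p2).
Proof.
move=> [g1 ->] [g2 ->]; exists (fun v => g1 v + g2 v).
by rewrite -big_split; apply: eq_bigr => v _; rewrite mulrDl.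
Qed.

Lemma sq_idealMl r p : in_sq_ideal q p -> in_sq_ideal q (r * p).
Proof.
move=> [g ->]; exists (fun v => r * g v).
by rewrite mulr_sumr; apply: eq_bigr => v _; rewrite mulrA.
Qed.

Lemma sq_ideal_sum (I : Type) (s : seq I) (P : pred I) (F : I -> W q) :
  (forall i, P i -> in_sq_ideal q (F i)) ->
  in_sq_ideal q (\sum_(i <- s | P i) F i).
Proof.
move=> IF; elim/big_rec: _ => [|i p Pi]; first exact: sq_ideal0.
exact/sq_idealD/IF.
Qed.

Lemma sq_ideal_dvar_sqr r v : in_sq_ideal q (r * dvar q v ^+ 2).
Proof.
exists (fun w => if w == v then r else 0).
by rewrite (bigD1 v) //= eqxx big1 ?addr0 // => w /negPf ->; rewrite mul0r.
Qed.

Lemma omeq0 p : in_sq_ideal q p -> omeq q p 0.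
Proof. by rewrite /omeq subr0. Qed.

Lemma pchar_W : (2 \in [pchar W q])%N.
Proof. by rewrite (pchar_lalg (W q)) pchar_Fp. Qed.

Lemma mulrn_pchar2 p k : p *+ k = p *+ odd k.
Proof.
by rewrite -modn2 {1}(divn_eq k 2) mulrnDr mulrnA mulrn_pchar ?pchar_W ?add0r.
Qed.

Lemma sq_ideal_prod_pair s a b (P : pred nat) (F : nat -> W q) v :
    uniq s -> a != b -> a \in s -> b \in s -> P a -> P b ->
    F a = dvar q v -> F b = dvar q v ->
  in_sq_ideal q (\prod_(j <- s | P j) F j).
Proof.
move=> us neq_ab a_s b_s Pa Pb Fa Fb.
have b_rem : b \in rem a s by rewrite (mem_rem_uniq _ us) inE eq_sym neq_ab.
rewrite (big_rem a) //= (big_rem b) //= Pa Pb Fa Fb mulrA -expr2 mulrC.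
exact: sq_ideal_dvar_sqr.
Qed.

(* In characteristic 2 two equal summands cancel. *)
Lemma sq_ideal_sum_pair s a b (F : nat -> W q) :
    uniq s -> a != b -> a \in s -> b \in s -> F a = F b ->
    {in s, forall k, k != a -> k != b -> in_sq_ideal q (F k)} ->
  in_sq_ideal q (\sum_(k <- s) F k).
Proof.
move=> us neq_ab a_s b_s Fab IF.
have b_rem : b \in rem a s by rewrite (mem_rem_uniq _ us) inE eq_sym neq_ab.
rewrite (big_rem a) //= (big_rem b) //= addrA Fab addrr_pchar2 ?pchar_W // add0r.
rewrite big_seq; apply: sq_ideal_sum => k.
rewrite (mem_rem_uniq _ (rem_uniq _ us)) inE (mem_rem_uniq _ us) !inE.
by case/and3P=> kb ka ks; apply: IF.
Qed.

End SquareIdeal.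

Section DeRham.
Variable q : nat.
Implicit Types a b : W q.

Lemma dR0 : dR q 0 = 0.
Proof. by rewrite /dR big1 // => v _; rewrite mderiv0 mul0r. Qed.

Lemma dR_pvar v : dR q (pvar q v) = dvar q v.
Proof.
rewrite /dR (bigD1 v) //= big1 => [|w neq_wv]; rewrite /pvar mderivX mnm1E.
  by rewrite eqxx -{1}[U_(_)%MM]add0m addmK mpolyX0 scale1r mul1r addr0.
by rewrite (inj_eq (@lshift_inj _ _)) eq_sym (negPf neq_wv) scale0r mul0r.
Qed.

Lemma dRM a b : dR q (a * b) = dR q a * b + a * dR q b.
Proof.
rewrite /dR mulr_sumr mulr_suml -big_split; apply: eq_bigr => v _.
by rewrite mderivM mulrDl mulrAC mulrA.
Qed.

Lemma dRX a k : dR q (a ^+ k.+1) = (a ^+ k * dR q a) *+ k.+1.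
Proof.
elim: k => [|k IHk]; first by rewrite expr1 expr0 mul1r.
by rewrite exprS dRM IHk mulrnAr mulrA -exprS mulrC -mulrS.
Qed.

End DeRham.

HB.instance Definition _ q q' f :=
  GRing.RMorphism.copy (Omega_map q q' f) (comp_mpoly _).
HB.instance Definition _ n q i :=
  GRing.RMorphism.copy (face n q i) (Omega_map q.+1 q (faceR_gen n q i)).
HB.instance Definition _ q i :=
  GRing.RMorphism.copy (degen q i) (Omega_map q q.+1 (degR_gen q i)).

Section OmegaMap.
Variables (q q' : nat) (f : 'I_q.+1 -> W q').

Lemma Omega_map_pvar v : Omega_map q q' f (pvar q v) = f v.
Proof.
rewrite /Omega_map /pvar comp_mpolyXU -tnth_nth tnth_mktuple.
by rewrite (unsplitK (inl v)).
Qed.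

Lemma Omega_map_dvar v : Omega_map q q' f (dvar q v) = dR q' (f v).
Proof.
rewrite /Omega_map /dvar comp_mpolyXU -tnth_nth tnth_mktuple.
by rewrite (unsplitK (inr v)).
Qed.

End OmegaMap.

Definition faceY n m i j : W m :=
  if (i < j)%N then (if j == 1%N then X m ^+ n.+1 else Y m j.-1)
  else if (j < m.+1)%N then Y m j else 0.

Definition facedY n m i j : W m := dR m (faceY n m i j).

Section Faces.
Variables n m : nat.

Lemma face_X i : face n m i (X m.+1) = X m.
Proof. exact: Omega_map_pvar. Qed.

Lemma face_dX i : face n m i (dX m.+1) = dX m.
Proof. by rewrite /face Omega_map_dvar dR_pvar. Qed.

Lemma face_Y i j : (1 <= j <= m.+1)%N -> face n m i (Y m.+1 j) = faceY n m i j.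
Proof.
case/andP=> j_gt0 j_le; rewrite /face Omega_map_pvar /faceR_gen inordK //.
by rewrite eqn0Ngt j_gt0.
Qed.

Lemma face_dY i j : (1 <= j <= m.+1)%N -> face n m i (dY m.+1 j) = facedY n m i j.
Proof.
case/andP=> j_gt0 j_le; rewrite /face Omega_map_dvar /faceR_gen inordK //.
by rewrite eqn0Ngt j_gt0.
Qed.

Lemma face_prod_dY i (P : pred nat) :
  face n m i (\prod_(1 <= j < m.+2 | P j) dY m.+1 j)
  = \prod_(1 <= j < m.+2 | P j) facedY n m i j.
Proof.
rewrite rmorph_prod big_nat_cond [RHS]big_nat_cond.
by apply: eq_bigr => j /andP[j_range _]; apply: face_dY.
Qed.

Lemma facedY_le i j : (1 <= j <= i)%N -> (j <= m)%N -> facedY n m i j = dY m j.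
Proof.
case/andP=> _ j_le_i j_le.
by rewrite /facedY /faceY ltnNge j_le_i ltnS j_le dR_pvar.
Qed.

Lemma facedY_gt i j : (1 <= i)%N -> (i < j)%N -> facedY n m i j = dY m j.-1.
Proof.
move=> i_gt0 lt_ij; rewrite /facedY /faceY lt_ij.
have -> : (j == 1%N) = false by lia.
by rewrite dR_pvar.
Qed.

Lemma facedY_last : facedY n m m.+1 m.+1 = 0.
Proof. by rewrite /facedY /faceY !ltnn dR0. Qed.

Lemma facedY01 : facedY n m 0 1 = (X m ^+ n * dX m) *+ n.+1.
Proof. by rewrite /facedY /faceY /= dRX dR_pvar. Qed.

Lemma facedY01_odd : odd n -> facedY n m 0 1 = 0.
Proof. by move=> n_odd; rewrite facedY01 mulrn_pchar2 /= n_odd. Qed.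

Lemma facedY01_even : ~~ odd n -> facedY n m 0 1 = X m ^+ n * dX m.
Proof. by move=> n_even; rewrite facedY01 mulrn_pchar2 /= n_even. Qed.

Lemma sq_ideal_prod_facedY i (P : pred nat) :
  (1 <= i <= m)%N -> P i -> P i.+1 ->
  in_sq_ideal m (\prod_(1 <= j < m.+2 | P j) facedY n m i j).
Proof.
case/andP=> i_gt0 i_le Pi Pi1.
apply: (@sq_ideal_prod_pair m _ i i.+1 _ _ (inord i)) => //.
- exact: iota_uniq.
- by rewrite neq_ltn ltnSn.
- by rewrite mem_index_iota; lia.
- by rewrite mem_index_iota; lia.
- by rewrite facedY_le ?i_gt0 ?leqnn.
- by rewrite facedY_gt.
Qed.

Lemma prod_facedY_last (P : pred nat) :
  P m.+1 -> \prod_(1 <= j < m.+2 | P j) facedY n m m.+1 j = 0.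
Proof.
by move=> Pm; rewrite (@prod_seq_eq0 _ _ m.+1) ?facedY_last // mem_index_iota ltnSn.
Qed.

Lemma is_cycle_faces w :
    (forall i, (1 <= i <= m)%N -> in_sq_ideal m (face n m i w)) ->
    face n m m.+1 w = 0 -> in_sq_ideal m (face n m 0 w) ->
  is_cycle n m.+1 w.
Proof.
move=> inner last zeroth; split; last exact: omeq0.
move=> i /andP[i_gt0]; rewrite leq_eqVlt ltnS => /orP[/eqP->|i_le].
  by rewrite last; apply/omeq0/sq_ideal0.
by apply/omeq0/inner; rewrite i_gt0.
Qed.

End Faces.

Section Cycles.
Variables n m : nat.

Lemma face_omega i : face n m i (omega m.+1) = \prod_(1 <= j < m.+2) facedY n m i j.
Proof. exact: (face_prod_dY _ _ _ xpredT). Qed.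

Lemma face_omega_i i k :
  face n m i (omega_i m.+1 k) = \prod_(1 <= j < m.+2 | j != k) facedY n m i j.
Proof. exact: face_prod_dY. Qed.

Lemma face_alpha i :
  face n m i (alpha m.+1) = dX m * \prod_(1 <= j < m.+2) facedY n m i j.
Proof. by rewrite rmorphM /= face_dX face_omega. Qed.

Lemma face_beta i : face n m i (beta m.+1) =
  X m * \prod_(1 <= j < m.+2) facedY n m i j
  + dX m * \sum_(1 <= k < m.+2)
             faceY n m i k * \prod_(1 <= j < m.+2 | j != k) facedY n m i j.
Proof.
rewrite rmorphD !rmorphM rmorph_sum /= face_X face_dX face_omega.
congr (_ + _ * _); rewrite big_nat_cond [RHS]big_nat_cond.
by apply: eq_bigr => k /andP[k_range _]; rewrite rmorphM /= face_Y // face_omega_i.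
Qed.

Lemma omega_cycle : odd n -> is_cycle n m.+1 (omega m.+1).
Proof.
move=> n_odd; apply: is_cycle_faces => [i i_range||]; rewrite face_omega.
- exact: sq_ideal_prod_facedY.
- exact: prod_facedY_last.
- by rewrite big_ltn // facedY01_odd // mul0r; apply: sq_ideal0.
Qed.

Lemma alpha_cycle : ~~ odd n -> is_cycle n m.+1 (alpha m.+1).
Proof.
move=> n_even; apply: is_cycle_faces => [i i_range||]; rewrite face_alpha.
- by apply: sq_idealMl; apply: sq_ideal_prod_facedY.
- by rewrite prod_facedY_last ?mulr0.
- rewrite big_ltn // facedY01_even //.
  set R := \prod_(2 <= j < m.+2) _.
  have -> : dX m * (X m ^+ n * dX m * R) = X m ^+ n * R * dX m ^+ 2 by ring.
  exact: sq_ideal_dvar_sqr.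
Qed.

Lemma beta_face_inner i :
  (1 <= i <= m)%N -> in_sq_ideal m (face n m i (beta m.+1)).
Proof.
move=> i_range; have /andP[i_gt0 i_le] := i_range.
rewrite face_beta; apply: sq_idealD; apply: sq_idealMl.
  exact: sq_ideal_prod_facedY.
have i_in : i \in index_iota 1 m.+2 by rewrite mem_index_iota; lia.
have i1_in : i.+1 \in index_iota 1 m.+2 by rewrite mem_index_iota; lia.
apply: (@sq_ideal_sum_pair m _ i i.+1) => //.
- exact: iota_uniq.
- by rewrite neq_ltn ltnSn.
- have faceY_i : faceY n m i i = Y m i by rewrite /faceY ltnn ltnS i_le.
  have faceY_i1 : faceY n m i i.+1 = Y m i.
    by rewrite /faceY ltnSn; have -> : (i.+1 == 1%N) = false by lia.
  rewrite faceY_i faceY_i1 (@prod_seq_neq_swap _ _ i i.+1) //.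
    exact: iota_uniq.
  by rewrite facedY_le ?facedY_gt ?i_gt0 ?leqnn.
- move=> k _ k_i k_i1; apply: sq_idealMl.
  by apply: sq_ideal_prod_facedY; rewrite // eq_sym.
Qed.

Lemma beta_face_last : face n m m.+1 (beta m.+1) = 0.
Proof.
rewrite face_beta prod_facedY_last // mulr0 add0r.
rewrite big1_seq ?mulr0 // => k /andP[_ k_in].
have [->|k_neq] := eqVneq k m.+1; first by rewrite /faceY !ltnn mul0r.
by rewrite prod_facedY_last ?mulr0 // eq_sym.
Qed.

Lemma beta_face0 : ~~ odd n -> in_sq_ideal m (face n m 0 (beta m.+1)).
Proof.
move=> n_even; rewrite face_beta.
rewrite [\prod_(1 <= j < m.+2) _]big_ltn // [\sum_(1 <= k < m.+2) _]big_ltn //.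
rewrite [\prod_(1 <= j < m.+2 | j != 1%N) _]big_ltn_cond //= facedY01_even //.
have -> : \prod_(2 <= j < m.+2 | j != 1%N) facedY n m 0 j
          = \prod_(2 <= j < m.+2) facedY n m 0 j.
  by rewrite big_nat_cond [RHS]big_nat_cond; apply: eq_bigl => j; apply/idP/idP; lia.
set R := \prod_(2 <= j < m.+2) _.
have cancel : X m * (X m ^+ n * dX m * R) = dX m * (faceY n m 0 1 * R).
  by rewrite /faceY /= exprS; ring.
rewrite mulrDr addrA cancel addrr_pchar2 ?pchar_W // add0r.
rewrite mulr_sumr big_nat_cond; apply: sq_ideal_sum => k /andP[/andP[k_gt1 _] _].
have k_neq1 : (1 != k)%N by lia.
rewrite big_ltn_cond // k_neq1 facedY01_even //.
set R' := \prod_(2 <= j < m.+2 | _) _.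
have -> : dX m * (faceY n m 0 k * (X m ^+ n * dX m * R'))
          = faceY n m 0 k * X m ^+ n * R' * dX m ^+ 2 by ring.
exact: sq_ideal_dvar_sqr.
Qed.

Lemma beta_cycle : ~~ odd n -> is_cycle n m.+1 (beta m.+1).
Proof.
move=> n_even; apply: is_cycle_faces.
- exact: beta_face_inner.
- exact: beta_face_last.
- exact: beta_face0.
Qed.

End Cycles.

Section Degeneracies.
Variable q : nat.

Lemma degen_Y i j : (1 <= j <= q)%N -> degen q i (Y q j) = Y q.+1 (bump i.+1 j).
Proof.
case/andP=> j_gt0 j_le; rewrite /degen Omega_map_pvar /degR_gen inordK ?ltnS //.
by rewrite eqn0Ngt j_gt0 /= /bump; case: leqP.
Qed.

Lemma degen_dY i j : (1 <= j <= q)%N -> degen q i (dY q j) = dY q.+1 (bump i.+1 j).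
Proof.
case/andP=> j_gt0 j_le; rewrite /degen Omega_map_dvar /degR_gen inordK ?ltnS //.
by rewrite eqn0Ngt j_gt0 /= /bump; case: leqP => _; rewrite dR_pvar.
Qed.

Lemma degen_prod_dY i (P : pred nat) : (i <= q)%N ->
  degen q i (\prod_(1 <= j < q.+1 | P j) dY q j)
  = \prod_(1 <= j < q.+2 | (j != i.+1) && P (unbump i.+1 j)) dY q.+1 j.
Proof.
move=> le_iq; rewrite rmorph_prod -big_nat_bump ?ltnS //.
rewrite big_nat_cond [RHS]big_nat_cond.
by apply: eq_bigr => j /andP[j_range _]; apply: degen_dY.
Qed.

Lemma degen_omega i : (i <= q)%N -> degen q i (omega q) = omega_i q.+1 i.+1.
Proof.
move=> le_iq; rewrite (degen_prod_dY _ xpredT) //.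
by apply: eq_bigl => j; rewrite andbT.
Qed.

Lemma degen_omega_i i k : (i <= q)%N ->
  degen q i (omega_i q k) = omega_ij q.+1 i.+1 (bump i.+1 k).
Proof.
move=> le_iq; rewrite degen_prod_dY //; apply: eq_bigl => j.
have [//|neq_j] := eqVneq j i.+1.
by rewrite -(inj_eq (can_inj (bumpK i.+1))) unbumpK // inE.
Qed.

Lemma inD_degen i u : (i <= q)%N -> inD q (degen q i u).
Proof.
move=> le_iq; exists (fun i' : 'I_q.+1 => if val i' == i then u else 0).
rewrite /omeq (bigD1 (inord i)) //= inordK ?ltnS // eqxx big1 ?addr0 ?subrr.
  exact: sq_ideal0.
move=> i' /eqP neq_i'; case: eqP => [eq_i'|_]; last exact: rmorph0.
by case: neq_i'; apply: val_inj; rewrite /= inordK ?ltnS // eq_i'.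
Qed.

Lemma unbump_range h r : (1 <= h <= q.+1)%N -> (1 <= r <= q.+1)%N -> r != h ->
  (1 <= unbump h r <= q)%N.
Proof.
move=> h_range r_range neq_rh; rewrite /unbump.
by case: (ltnP h r) => lt_hr; rewrite ?subn1 ?subn0; lia.
Qed.

Lemma omega_i_degenerate r : (1 <= r <= q.+1)%N -> inD q (omega_i q.+1 r).
Proof.
by case: r => // i /andP[_ le_iq]; rewrite -degen_omega //; apply: inD_degen.
Qed.

Lemma omega_ij_degenerate j k : (1 <= j)%N -> (j < k)%N -> (k <= q.+1)%N ->
  inD q (omega_ij q.+1 j k).
Proof.
case: j => // i _ lt_ik le_kq; have le_iq : (i <= q)%N by lia.
have <- : bump i.+1 (unbump i.+1 k) = k by rewrite unbumpK // inE gtn_eqF.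
by rewrite -degen_omega_i //; apply: inD_degen.
Qed.

Lemma omega_ijC j k : omega_ij q.+1 j k = omega_ij q.+1 k j.
Proof. by apply: eq_bigl => t; rewrite andbC. Qed.

Lemma inD_Y_omega_ij i r l : (i <= q)%N -> (1 <= r <= q.+1)%N ->
  r != i.+1 -> l != i.+1 -> inD q (Y q.+1 r * omega_ij q.+1 i.+1 l).
Proof.
move=> le_iq r_range neq_r neq_l.
have r'_range : (1 <= unbump i.+1 r <= q)%N by apply: unbump_range; rewrite ?ltnS.
have <- : bump i.+1 (unbump i.+1 r) = r by rewrite unbumpK // inE.
have <- : bump i.+1 (unbump i.+1 l) = l by rewrite unbumpK // inE.
by rewrite -degen_Y // -degen_omega_i // -rmorphM; apply: inD_degen.
Qed.

Lemma Y_omega_ij_degenerate r j k : (1 <= r <= q.+1)%N -> (1 <= j)%N ->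
  (j < k)%N -> (k <= q.+1)%N -> inD q (Y q.+1 r * omega_ij q.+1 j k).
Proof.
move=> r_range j_gt0 lt_jk le_kq.
have [->|neq_rj] := eqVneq r j.
  rewrite omega_ijC; case: k lt_jk le_kq => // i lt_ji le_iq.
  by apply: inD_Y_omega_ij; lia.
case: j j_gt0 lt_jk neq_rj => // i _ lt_ik neq_ri.
by apply: inD_Y_omega_ij; lia.
Qed.

End Degeneracies.

Theorem lemma2p3 (n : nat) (hn : (1 <= n)%N) (q : nat) :
  (odd n -> is_cycle n q (omega q))
  /\ (~~ odd n -> is_cycle n q (alpha q) /\ is_cycle n q (beta q))
  /\ (forall r : nat, (1 <= r <= q.+1)%N -> inD q (omega_i q.+1 r))
  /\ (forall j k : nat, (1 <= j)%N -> (j < k)%N -> (k <= q.+1)%N ->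
        inD q (omega_ij q.+1 j k))
  /\ (forall r j k : nat, (1 <= r <= q.+1)%N -> (1 <= j)%N -> (j < k)%N ->
        (k <= q.+1)%N -> inD q (Y q.+1 r * omega_ij q.+1 j k)).
Proof.
split; last split; last split; last split.
- by case: q => [//|m]; apply: omega_cycle.
- by case: q => [//|m] n_even; split; [apply: alpha_cycle | apply: beta_cycle].
- exact: omega_i_degenerate.
- exact: omega_ij_degenerate.
- exact: Y_omega_ij_degenerate.
Qed.
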